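(* Let $\mathbf R=\{R_i,t_i\}_{i\ge0}$ be a purely inseparable tower arising from a pair $(R,I_0)$ which satisfies conditions (d) and (f), with first perfectoid pillar $I_1$. Then $\mathbf R$ satisfies condition (g) if and only if, for every $i\ge0$, the following two commutative squares of sets are cartesian: $$\begin{array}{ccc}(R_i)_{I_0\text{-tor}}&\xrightarrow{\varphi_{I_0,R_i}}&R_i/I_0R_i\\ {\scriptstyle(t_i)_{\mathrm{tor}}}\downarrow&&\downarrow{\scriptstyle\overline{t_i}}\\ (R_{i+1})_{I_0\text{-tor}}&\xrightarrow{\varphi_{I_0,R_{i+1}}}&R_{i+1}/I_0R_{i+1}\end{array}\qquad \begin{array}{ccc}(R_{i+1})_{I_0\text{-tor}}&\xrightarrow{\varphi_{I_1,R_{i+1}}}&R_{i+1}/I_1R_{i+1}\\ {\scriptstyle x\mapsto x^p}\downarrow&&\downarrow{\scriptstyle\varphi'}\\ (R_{i+1})_{I_0\text{-tor}}&\xrightarrow{\varphi_{I_0,R_{i+1}}}&R_{i+1}/I_0R_{i+1}\end{array}$$ where $(t_i)_{\mathrm{tor}}$ is the restriction of $t_i$, $\varphi_{I_1,R_{i+1}}$ is the inclusion $(R_{i+1})_{I_0\text{-tor}}\subset R_{i+1}$ followed by the projection to $R_{i+1}/I_1R_{i+1}$, and $\varphi'$ is the map $x\bmod I_1R_{i+1}\mapsto x^p\bmod I_0R_{i+1}$.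
   Context: Fix a prime $p$; rings are commutative with $1$. For a ring $A$, an ideal $I$ and an $A$-module $M$, $M_{I\text{-tor}}$ is the submodule of $x\in M$ such that for every $a\in I$ some $a^nx=0$; $\varphi_{I,A}\colon A_{I\text{-tor}}\to A/IA$ is inclusion followed by projection. $\varphi$ is absolute Frobenius. A tower of rings $\mathbf R=\{R_i,t_i\}_{i\ge0}$ is a sequence of ring maps $R_0\xrightarrow{t_0}R_1\to\cdots$. For a ring $R$ and ideal $I_0$, write $\overline{R_i}=R_i/I_0R_i$, $\overline{t_i}$ the induced maps. A purely inseparable tower arising from $(R,I_0)$: (a) $R_0=R$, $p\in I_0$; (b) each $\overline{t_i}$ injective; (c) $\varphi(\overline{R_{i+1}})\subset\overline{t_i}(\overline{R_i})$; then $F_i\colon\overline{R_{i+1}}\to\overline{R_i}$ is the unique ring map with $\overline{t_i}\circ F_i=\varphi$. Conditions: (d) each $F_i$ is surjective; (f) $I_0$ is principal and there is a principal ideal $I_1\subset R_1$ (the first perfectoid pillar) with $I_1^p=I_0R_1$ and $\ker F_i=I_1\overline{R_{i+1}}$ for all $i\ge0$; (g) for all $i$, $I_0(R_i)_{I_0\text{-tor}}=0$ and there is a bijection $(F_i)_{\mathrm{tor}}\colon(R_{i+1})_{I_0\text{-tor}}\to(R_i)_{I_0\text{-tor}}$ with $\varphi_{I_0,R_i}\circ(F_i)_{\mathrm{tor}}=F_i\circ\varphi_{I_0,R_{i+1}}$. *)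

From HB Require Import structures.
From mathcomp Require Import all_boot all_algebra.
Set Implicit Arguments. Unset Strict Implicit. Unset Printing Implicit Defensive.
Import GRing.Theory.
Local Open Scope ring_scope.

(* Ideals are Prop-valued predicates; quotients R/J are represented by
   representatives together with the congruence  x == y mod J  :=  J (x - y). *)

Definition pid (R : comPzRingType) (a : R) : R -> Prop := fun x => exists c, x = c * a.

Definition cong (R : comPzRingType) (J : R -> Prop) (x y : R) : Prop := J (x - y).

Definition tor (R : comPzRingType) (I : R -> Prop) (x : R) : Prop :=
  forall a, I a -> exists n : nat, a ^+ n * x = 0.

Fixpoint tr (R : nat -> comPzRingType) (t : forall i, {rmorphism R i -> R i.+1})
  (i : nat) : R 0 -> R i :=
  match i as n return R 0 -> R n with
  | O => fun x => x
  | S j => fun x => t j (tr t j x)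
  end.

Fixpoint tr1 (R : nat -> comPzRingType) (t : forall i, {rmorphism R i -> R i.+1})
  (i : nat) : R 1 -> R i.+1 :=
  match i as n return R 1 -> R n.+1 with
  | O => fun x => x
  | S j => fun x => t j.+1 (tr1 t j x)
  end.

Arguments tr {R} t i.
Arguments tr1 {R} t i.

(* I_0 R_i, where I_0 = w0 R_0 (I_0 principal, condition (f)) *)
Definition I0R (R : nat -> comPzRingType) (t : forall i, {rmorphism R i -> R i.+1})
  (w0 : R 0) (i : nat) : R i -> Prop := pid (tr t i w0).

Arguments I0R {R} t w0 i.

Definition I1R (R : nat -> comPzRingType) (t : forall i, {rmorphism R i -> R i.+1})
  (w1 : R 1) (i : nat) : R i.+1 -> Prop := pid (tr1 t i w1).

Arguments I1R {R} t w1 i.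

Definition pi_tower (p : nat) (R : nat -> comPzRingType)
  (t : forall i, {rmorphism R i -> R i.+1}) (w0 : R 0) : Prop :=
  [/\ pid w0 (p%:R),
      (forall i (x y : R i), cong (I0R t w0 i.+1) (t i x) (t i y) ->
                             cong (I0R t w0 i) x y)
    & (forall i (y : R i.+1), exists x : R i,
          cong (I0R t w0 i.+1) (t i x) (y ^+ p))].

(* F_i (y mod I_0) = x mod I_0  iff  t_i x == y^p mod I_0 R_{i+1}. *)
Definition Frel (p : nat) (R : nat -> comPzRingType)
  (t : forall i, {rmorphism R i -> R i.+1}) (w0 : R 0) (i : nat)
  (y : R i.+1) (x : R i) : Prop := cong (I0R t w0 i.+1) (t i x) (y ^+ p).

Arguments Frel p {R} t w0 i y x.

Definition cond_d (p : nat) (R : nat -> comPzRingType)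
  (t : forall i, {rmorphism R i -> R i.+1}) (w0 : R 0) : Prop :=
  forall i (x : R i), exists y : R i.+1, Frel p t w0 i y x.

(* Condition (f), with I_0 = (w0) and first perfectoid pillar I_1 = (w1):
   I_1^p = (w1^p) = I_0 R_1, and ker F_i = I_1 \bar{R_{i+1}}, i.e.
   F_i(y mod I_0) = 0  iff  y \in I_1 R_{i+1} + I_0 R_{i+1}. *)
Definition cond_f (p : nat) (R : nat -> comPzRingType)
  (t : forall i, {rmorphism R i -> R i.+1}) (w0 : R 0) (w1 : R 1) : Prop :=
  (forall x : R 1, pid (w1 ^+ p) x <-> I0R t w0 1 x) /\
  (forall i (y : R i.+1),
      (exists x : R i, Frel p t w0 i y x /\ I0R t w0 i x) <->
      (exists u v : R i.+1, y = u * tr1 t i w1 + v * tr t i.+1 w0)).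

Definition cond_g (p : nat) (R : nat -> comPzRingType)
  (t : forall i, {rmorphism R i -> R i.+1}) (w0 : R 0) : Prop :=
  forall i,
    (forall x : R i, tor (I0R t w0 i) x -> forall a, I0R t w0 i a -> a * x = 0) /\
    exists Ft : {y : R i.+1 | tor (I0R t w0 i.+1) y} ->
                {x : R i | tor (I0R t w0 i) x},
      bijective Ft /\ forall y, Frel p t w0 i (sval y) (sval (Ft y)).

(* A commutative square of sets
       A --f--> B
       g|       |h
       C --k--> D
   where A (resp. C) is the subset PA (resp. PC) of a type, and B, D are quotient
   sets represented by representatives modulo equivalences eqB, eqD (maps into
   them are given on representatives).  It is cartesian iff
   A -> C x_D B, a |-> (g a, f a) is bijective. *)
Definition cartesian {A B C D : Type} (PA : A -> Prop) (PC : C -> Prop)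
  (eqB : B -> B -> Prop) (eqD : D -> D -> Prop)
  (f : A -> B) (g : A -> C) (h : B -> D) (k : C -> D) : Prop :=
  forall (c : C) (b : B), PC c -> eqD (k c) (h b) ->
    exists! a : A, [/\ PA a, g a = c & eqB (f a) b].

Definition square1 (R : nat -> comPzRingType)
  (t : forall i, {rmorphism R i -> R i.+1}) (w0 : R 0) (i : nat) : Prop :=
  cartesian (tor (I0R t w0 i)) (tor (I0R t w0 i.+1))
    (cong (I0R t w0 i)) (cong (I0R t w0 i.+1))
    (fun x : R i => x) (fun x => t i x) (fun x => t i x) (fun y : R i.+1 => y).

Definition square2 (p : nat) (R : nat -> comPzRingType)
  (t : forall i, {rmorphism R i -> R i.+1}) (w0 : R 0) (w1 : R 1) (i : nat) : Prop :=
  cartesian (tor (I0R t w0 i.+1)) (tor (I0R t w0 i.+1))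
    (cong (I1R t w1 i)) (cong (I0R t w0 i.+1))
    (fun x : R i.+1 => x) (fun x => x ^+ p) (fun x => x ^+ p) (fun y : R i.+1 => y).

(* Condition (g) says two things: the I_0-torsion of every R_i is killed by I_0,
   and the relation  t_i x = y^p mod I_0  is the graph of a bijection from the
   torsion of R_{i+1} onto that of R_i.  Once the torsion is killed by I_0,
   congruent torsion elements are equal and p kills the torsion, so Frobenius
   is additive on it; the bijection then gives torsion p-th roots of torsion
   elements, and the two squares follow.  Conversely, for w y with w^2 y = 0
   the uniqueness in both squares forces w y = 0, so the torsion is killed by
   I_0, and the squares yield the three properties of the graph. *)

From HB Require Import structures.
From mathcomp Require Import all_boot all_algebra.
From mathcomp Require Import ring.
From Stdlib Require Import ProofIrrelevance IndefiniteDescription.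

Set Implicit Arguments. Unset Strict Implicit. Unset Printing Implicit Defensive.
Import GRing.Theory.
Local Open Scope ring_scope.

Lemma sval_inj (A : Type) (P : A -> Prop) : injective (@sval A P).
Proof. by case=> a pa [b pb] /= eab; apply: subset_eq_compat. Qed.

Lemma inj_surj_bijective (A B : Type) (f : A -> B) :
  injective f -> (forall b, exists a, f a = b) -> bijective f.
Proof.
move=> f_inj f_surj.
pose g b := proj1_sig (constructive_indefinite_description _ (f_surj b)).
have gK : cancel g f.
  by move=> b; rewrite /g; case: (constructive_indefinite_description _ _).
by exists g => // a; apply: f_inj; rewrite gK.
Qed.

Lemma sig_bijective_graph (A B : Type) (P : A -> Prop) (Q : B -> Prop)
    (r : A -> B -> Prop) :
  (forall a b1 b2, P a -> Q b1 -> Q b2 -> r a b1 -> r a b2 -> b1 = b2) ->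
  (exists f : {a | P a} -> {b | Q b},
      bijective f /\ forall a, r (sval a) (sval (f a))) <->
  [/\ forall a, P a -> exists b, Q b /\ r a b,
      forall a1 a2 b, P a1 -> P a2 -> Q b -> r a1 b -> r a2 b -> a1 = a2 &
      forall b, Q b -> exists a, P a /\ r a b].
Proof.
move=> r_fun; split=> [[f [[g fK gK] rf]] | [r_tot r_inj r_surj]].
  split=> [a Pa | a1 a2 b Pa1 Pa2 Qb ra1 ra2 | b Qb].
  - exists (sval (f (exist _ a Pa))); split; first exact: svalP.
    exact: rf (exist _ a Pa).
  - pose sa1 : {a | P a} := exist _ a1 Pa1; pose sa2 : {a | P a} := exist _ a2 Pa2.
    have fA (sa : {a | P a}) : r (sval sa) b -> sval (f sa) = b.
      exact: r_fun (svalP sa) (svalP (f sa)) Qb (rf sa).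
    have /(congr1 g) : f sa1 = f sa2 by apply: sval_inj; rewrite !fA.
    by rewrite !fK => /(congr1 sval).
  - pose sb : {b | Q b} := exist _ b Qb.
    exists (sval (g sb)); split; first exact: svalP.
    by have := rf (g sb); rewrite gK.
pose fr (sa : {a | P a}) := constructive_indefinite_description _ (r_tot _ (svalP sa)).
exists (fun sa => exist Q (sval (fr sa)) (proj1 (svalP (fr sa)))).
have rf sa : r (sval sa) (sval (fr sa)) by exact: proj2 (svalP (fr sa)).
split=> //; apply: inj_surj_bijective => [sa1 sa2 /(congr1 sval) /= e | sb].
  apply: sval_inj; have := rf sa1; rewrite e => r1.
  exact: r_inj (svalP sa1) (svalP sa2) (proj1 (svalP (fr sa2))) r1 (rf sa2).
have [a [Pa rab]] := r_surj _ (svalP sb).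
exists (exist _ a Pa); apply: sval_inj.
exact: r_fun Pa (proj1 (svalP (fr _))) (svalP sb) (rf (exist _ a Pa)) rab.
Qed.

Section PrincipalIdeal.
Variable S : comPzRingType.
Implicit Types a b w x y : S.

Lemma pid0 w : pid w 0.
Proof. by exists 0; rewrite mul0r. Qed.

Lemma pid_gen w : pid w w.
Proof. by exists 1; rewrite mul1r. Qed.

Lemma pidD w x y : pid w x -> pid w y -> pid w (x + y).
Proof. by case=> a -> [b ->]; exists (a + b); rewrite mulrDl. Qed.

Lemma pidN w x : pid w x -> pid w (- x).
Proof. by case=> a ->; exists (- a); rewrite mulNr. Qed.

Lemma pidMl w x y : pid w x -> pid w (y * x).
Proof. by case=> a ->; exists (y * a); rewrite mulrA. Qed.

Lemma pidMr w x y : pid w x -> pid w (x * y).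
Proof. by rewrite mulrC; apply: pidMl. Qed.

Lemma pid_trans a b x : pid a b -> pid b x -> pid a x.
Proof. by move=> ab [c ->]; apply: pidMl. Qed.

Lemma pid_exprS w n : pid w (w ^+ n.+1).
Proof. by rewrite exprSr; apply/pidMl/pid_gen. Qed.

Lemma cong_refl w x : cong (pid w) x x.
Proof. by rewrite /cong subrr; apply: pid0. Qed.

Lemma cong_sym w x y : cong (pid w) x y -> cong (pid w) y x.
Proof. by move=> xy; rewrite /cong -opprB; apply: pidN. Qed.

Lemma cong_trans w x y z : cong (pid w) x y -> cong (pid w) y z -> cong (pid w) x z.
Proof. by move=> xy yz; rewrite /cong -(subrK y x) -addrA; apply: pidD. Qed.

Lemma torE w x : tor (pid w) x <-> exists n, w ^+ n * x = 0.
Proof.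
split=> [|[n wx] a [c ->]]; first by apply; apply: pid_gen.
by exists n; rewrite exprMn -mulrA wx mulr0.
Qed.

Lemma tor_annihilated w x : w * x = 0 -> tor (pid w) x.
Proof. by move=> wx; apply/torE; exists 1%N; rewrite expr1. Qed.

Lemma tor0 w : tor (pid w) 0.
Proof. by apply: tor_annihilated; rewrite mulr0. Qed.

Lemma torMl w x y : tor (pid w) x -> tor (pid w) (y * x).
Proof. by move=> /torE [n wx]; apply/torE; exists n; rewrite mulrCA wx mulr0. Qed.

Lemma torB w x y : tor (pid w) x -> tor (pid w) y -> tor (pid w) (x - y).
Proof.
move=> /torE [n wx] /torE [m wy]; apply/torE; exists (n + m)%N.
by rewrite mulrBr exprD -!mulrA wy mulrCA wx !mulr0 subr0.
Qed.

Lemma torX w x n : (0 < n)%N -> tor (pid w) x -> tor (pid w) (x ^+ n).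
Proof. by case: n => // n _ wx; rewrite exprSr; apply: torMl. Qed.

Lemma prime_exprD p x y : prime p ->
  exists z, (x + y) ^+ p = x ^+ p + y ^+ p + p%:R * (x * y * z).
Proof.
move=> p_prime; have := prime_gt1 p_prime; case: p p_prime => [|q] // p_prime _.
exists (\sum_(i < q) (x ^+ (q - i.+1) * y ^+ i) *+ ('C(q.+1, i.+1) %/ q.+1)).
rewrite exprDn big_ord_recl big_ord_recr /= subn0 bin0 expr0 mulr1 subnn binn.
rewrite expr0 mul1r /bump /= add1n !mulr1n (addrC (\sum_(i < q) _)) addrA.
congr (_ + _); rewrite !mulr_sumr; apply: eq_bigr => i _ /=.
have i_range : (0 < i.+1 < q.+1)%N by rewrite /= ltnS ltn_ord.
rewrite /bump /= add1n -{1}(divnK (prime_dvd_bin p_prime i_range)) mulrnA mulr_natl.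
congr (_ *+ _); rewrite subSS -(subnSK (ltn_ord i)) exprS exprS mulrnAr.
by congr (_ *+ _); rewrite -!mulrA; congr (_ * _); rewrite mulrCA.
Qed.

Lemma congX_prime p w a x y : prime p -> pid w p%:R -> pid w (a ^+ p) ->
  cong (pid a) x y -> cong (pid w) (x ^+ p) (y ^+ p).
Proof.
move=> p_prime wp wa [c xy]; have [z xpE] := prime_exprD y (c * a) p_prime.
rewrite /cong; have -> : x ^+ p - y ^+ p = c ^+ p * a ^+ p + p%:R * (y * (c * a) * z).
  have -> : x = y + c * a by rewrite -xy addrC subrK.
  by rewrite xpE exprMn; ring.
by apply: pidD; [apply: pidMl | apply: pidMr].
Qed.

Lemma exprS_annihilate a x n : pid (a ^+ n.+1) (a ^+ n * x) ->
  exists y, a ^+ n * y = 0 /\ cong (pid a) y x.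
Proof.
case=> k ank; exists (x - k * a); split; first by rewrite mulrBr ank exprSr; ring.
by rewrite /cong addrAC subrr add0r; apply/pidN/pidMl/pid_gen.
Qed.

End PrincipalIdeal.

Lemma pid_rmorph (S T : comPzRingType) (f : {rmorphism S -> T}) w x :
  pid w x -> pid (f w) (f x).
Proof. by case=> c ->; exists (f c); rewrite rmorphM. Qed.

Lemma tor_rmorph (S T : comPzRingType) (f : {rmorphism S -> T}) w x :
  tor (pid w) x -> tor (pid (f w)) (f x).
Proof.
by move=> /torE [n wx]; apply/torE; exists n; rewrite -rmorphXn -rmorphM wx rmorph0.
Qed.

Definition bounded_torsion (S : comPzRingType) (w : S) :=
  forall x, tor (pid w) x -> w * x = 0.

Lemma bounded_torsionP (S : comPzRingType) (w : S) :
  bounded_torsion w <-> forall x, tor (pid w) x -> forall a, pid w a -> a * x = 0.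
Proof.
split=> [wB x wx a [c ->] | wB x wx]; last exact: wB _ wx _ (pid_gen w).
by rewrite -mulrA wB // mulr0.
Qed.

Lemma bounded_torsion_of_sq (S : comPzRingType) (w : S) :
  (forall y, w ^+ 2 * y = 0 -> w * y = 0) -> bounded_torsion w.
Proof.
move=> w_sq x /torE [n]; elim: n x => [|n IH] x.
  by rewrite mul1r => ->; rewrite mulr0.
by rewrite exprSr -mulrA => /IH; rewrite mulrA -expr2 => /w_sq.
Qed.

Section BoundedTorsion.
Variables (S : comPzRingType) (w : S).
Hypothesis wB : bounded_torsion w.

Lemma tor_pid_eq0 x : tor (pid w) x -> pid w x -> x = 0.
Proof.
move=> wx [c xE]; have wc : tor (pid w) c.
  by case/torE: wx => n wx; apply/torE; exists n.+1; rewrite exprSr -mulrA (mulrC w) -xE.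
by rewrite xE mulrC wB.
Qed.

Lemma tor_cong_eq x y : tor (pid w) x -> tor (pid w) y -> cong (pid w) x y -> x = y.
Proof. by move=> wx wy /(tor_pid_eq0 (torB wx wy)) /eqP; rewrite subr_eq0 => /eqP. Qed.

Lemma tor_exprDl p x y : prime p -> pid w p%:R -> tor (pid w) x ->
  (x + y) ^+ p = x ^+ p + y ^+ p.
Proof.
move=> p_prime [c pE] wx; have [z ->] := prime_exprD x y p_prime.
by rewrite pE !mulrA -(mulrA c) wB // mulr0 !mul0r addr0.
Qed.

End BoundedTorsion.

Lemma cartesian_uniq (A B C D : Type) (PA : A -> Prop) (PC : C -> Prop)
    (eqB : B -> B -> Prop) (eqD : D -> D -> Prop)
    (f : A -> B) (g : A -> C) (h : B -> D) (k : C -> D) (a1 a2 : A) (b : B) :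
  cartesian PA PC eqB eqD f g h k -> PA a1 -> PA a2 -> PC (g a1) -> g a1 = g a2 ->
  eqD (k (g a1)) (h b) -> eqB (f a1) b -> eqB (f a2) b -> a1 = a2.
Proof.
move=> sq PAa1 PAa2 PCg ga12 kgh fa1b fa2b.
have [a [_ a_uniq]] := sq _ _ PCg kgh.
by rewrite -(a_uniq a1) ?(a_uniq a2) // -ga12.
Qed.

Section Tower.
Variables (p : nat) (R : nat -> comPzRingType).
Variables (t : forall i, {rmorphism R i -> R i.+1}) (w0 : R 0) (w1 : R 1).

Local Notation w i := (tr t i w0).
Local Notation varpi i := (tr1 t i w1).
Local Notation tors i := (tor (I0R t w0 i)).

Hypothesis p_prime : prime p.
Hypothesis p_in_I0 : pid w0 p%:R.
Hypothesis t_descent : forall i (x y : R i),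
  cong (I0R t w0 i.+1) (t i x) (t i y) -> cong (I0R t w0 i) x y.
Hypothesis frobenius_image : forall i (y : R i.+1), exists x : R i, Frel p t w0 i y x.
Hypothesis F_surj : cond_d p t w0.
Hypothesis I1_pow : forall x : R 1, pid (w1 ^+ p) x <-> I0R t w0 1 x.
Hypothesis ker_F : forall i (y : R i.+1),
  (exists x : R i, Frel p t w0 i y x /\ I0R t w0 i x) <->
  (exists u v : R i.+1, y = u * varpi i + v * w i.+1).

Let p_gt1 : (1 < p)%N := prime_gt1 p_prime.
Let p_gt0 : (0 < p)%N := prime_gt0 p_prime.
Let zeroX (S : comPzRingType) : (0 : S) ^+ p = 0.
Proof. by rewrite expr0n eqn0Ngt p_gt0. Qed.

Lemma natr_in_w j : pid (w j) p%:R.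
Proof. by elim: j => [|j IH] //; have := pid_rmorph (t j) IH; rewrite rmorph_nat. Qed.

Lemma w_in_varpiX k : pid (varpi k ^+ p) (w k.+1).
Proof.
elim: k => [|k IH]; first exact/I1_pow/pid_gen.
by have := pid_rmorph (t k.+1) IH; rewrite rmorphXn.
Qed.

Lemma varpiX_in_w k : pid (w k.+1) (varpi k ^+ p).
Proof.
elim: k => [|k IH]; first exact/I1_pow/pid_gen.
by have := pid_rmorph (t k.+1) IH; rewrite rmorphXn.
Qed.

Lemma w_in_varpi k : pid (varpi k) (w k.+1).
Proof. by apply: pid_trans (w_in_varpiX k); rewrite -(prednK p_gt0); apply: pid_exprS. Qed.

Lemma pid_descent i (x : R i) : pid (w i.+1) (t i x) -> pid (w i) x.
Proof. by have := @t_descent i x 0; rewrite /cong rmorph0 !subr0. Qed.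

Lemma tor_t i (x : R i) : tors i x -> tors i.+1 (t i x).
Proof. exact: tor_rmorph. Qed.

Lemma varpi_of_frobenius i (e : R i.+1) : pid (w i.+1) (e ^+ p) -> pid (varpi i) e.
Proof.
move=> we; have : exists x : R i, Frel p t w0 i e x /\ I0R t w0 i x.
  by exists 0; split; [rewrite /Frel /cong rmorph0 sub0r; apply: pidN | apply: pid0].
case/ker_F => [a [b ->]].
by apply: pidD; apply: pidMl; [apply: pid_gen | apply: w_in_varpi].
Qed.

Lemma Frel_functional i : bounded_torsion (w i) ->
  forall (y : R i.+1) (x1 x2 : R i), tors i.+1 y -> tors i x1 -> tors i x2 ->
  Frel p t w0 i y x1 -> Frel p t w0 i y x2 -> x1 = x2.
Proof.
move=> wB y x1 x2 _ tx1 tx2 yx1 yx2; apply: (tor_cong_eq wB) => //.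
by apply: t_descent; apply: cong_trans yx1 (cong_sym yx2).
Qed.

Lemma cond_g_iff : cond_g p t w0 <->
  [/\ forall i, bounded_torsion (w i),
      forall i (y : R i.+1), tors i.+1 y -> exists x, tors i x /\ Frel p t w0 i y x,
      forall i (y1 y2 : R i.+1) (x : R i), tors i.+1 y1 -> tors i.+1 y2 -> tors i x ->
        Frel p t w0 i y1 x -> Frel p t w0 i y2 x -> y1 = y2 &
      forall i (x : R i), tors i x -> exists y, tors i.+1 y /\ Frel p t w0 i y x].
Proof.
split=> [g | [wB Frel_total Frel_inj Frel_surj] i].
  have wB i : bounded_torsion (w i) by apply/bounded_torsionP; case: (g i).
  have graph i := (sig_bijective_graph (Frel_functional (wB i))).1 (g i).2.
  by split=> // i; case: (graph i).
split; first exact/bounded_torsionP/wB.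
apply/(sig_bijective_graph (Frel_functional (wB i))).
exact: And3 (Frel_total i) (Frel_inj i) (Frel_surj i).
Qed.

Section SquaresOfCondG.
Hypothesis wB : forall i, bounded_torsion (w i).
Hypothesis Frel_total : forall i (y : R i.+1), tors i.+1 y ->
  exists x, tors i x /\ Frel p t w0 i y x.
Hypothesis Frel_inj : forall i (y1 y2 : R i.+1) (x : R i),
  tors i.+1 y1 -> tors i.+1 y2 -> tors i x ->
  Frel p t w0 i y1 x -> Frel p t w0 i y2 x -> y1 = y2.
Hypothesis Frel_surj : forall i (x : R i), tors i x ->
  exists y, tors i.+1 y /\ Frel p t w0 i y x.

Lemma tor_frobenius_eq0 i (y : R i.+1) : tors i.+1 y -> y ^+ p = 0 -> y = 0.
Proof.
have Frel0 (z : R i.+1) : z ^+ p = 0 -> Frel p t w0 i z 0.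
  by move=> zp; rewrite /Frel /cong rmorph0 zp subr0; apply: pid0.
move=> ty yp.
exact: Frel_inj ty (@tor0 _ (w i.+1)) (@tor0 _ (w i)) (Frel0 _ yp) (Frel0 _ (zeroX _)).
Qed.

Lemma tor_frobenius_inj i (x y : R i.+1) : tors i.+1 x -> tors i.+1 y ->
  x ^+ p = y ^+ p -> x = y.
Proof.
move=> tx ty xy; apply/eqP; rewrite -subr_eq0; apply/eqP.
apply: tor_frobenius_eq0; first exact: torB.
have := tor_exprDl (@wB i.+1) y p_prime (natr_in_w _) (torB tx ty).
by rewrite subrK xy -{1}(add0r (y ^+ p)) => /addIr <-.
Qed.

Lemma varpi_kills_tor k (d : R k.+1) : tors k.+1 d -> varpi k * d = 0.
Proof.
move=> td; apply: tor_frobenius_eq0; first exact: torMl.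
rewrite exprMn; have [c ->] := varpiX_in_w k.
by rewrite -mulrA wB ?mulr0 //; apply: torX.
Qed.

Lemma tor_frobenius_lift i (c : R i) : tors i c -> exists d, tors i.+1 d /\ t i c = d ^+ p.
Proof.
move=> tc; have [d [td cd]] := Frel_surj tc; exists d; split=> //.
by apply: (tor_cong_eq (@wB _)) cd; [apply: tor_t | apply: torX].
Qed.

Lemma varpiXpredM_in_w i (c b : R i.+1) : tors i.+1 c ->
  cong (I0R t w0 i.+1) c (b ^+ p) -> pid (w i.+1) (varpi i ^+ p.-1 * b).
Proof.
(* d is a torsion p-th root of t c; then e^p lies in I_0, so e lies in I_1 by
   the kernel condition (f), while varpi kills the torsion element d. *)
move=> tc cb; have [d [td cd]] := tor_frobenius_lift tc.
set e := t i.+1 b - d.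
have bE : t i.+1 b = d + e by rewrite /e addrC subrK.
have eX : e ^+ p = t i.+1 (b ^+ p - c).
  have deX := tor_exprDl (@wB i.+2) e p_prime (natr_in_w _) td.
  by rewrite rmorphB rmorphXn bE cd deX addrC addKr.
have [r eE] : pid (varpi i.+1) e.
  by apply: varpi_of_frobenius; rewrite eX; apply: pid_rmorph; apply: cong_sym.
apply: pid_descent; rewrite rmorphM rmorphXn bE mulrDr eE.
have -> : t i.+1 (varpi i) ^+ p.-1 * d = 0.
  by rewrite -(subnKC p_gt1) exprSr -mulrA varpi_kills_tor ?mulr0.
rewrite add0r mulrCA -exprSr prednK //; apply: pidMl; exact: varpiX_in_w.
Qed.

Lemma square2_exists i (c b : R i.+1) : tors i.+1 c ->
  cong (I0R t w0 i.+1) c (b ^+ p) ->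
  exists a, [/\ tors i.+1 a, a ^+ p = c & cong (I1R t w1 i) a b].
Proof.
move=> tc cb; have : pid (varpi i ^+ p.-1.+1) (varpi i ^+ p.-1 * b).
  by rewrite prednK //; apply: pid_trans (w_in_varpiX i) (varpiXpredM_in_w tc cb).
(* a is b corrected by a multiple of varpi so that varpi^(p-1) a = 0, which
   makes a torsion since I_0 R_{i+1} = (varpi^p). *)
case/exprS_annihilate => a [va ab]; exists a.
have ta : tors i.+1 a.
  apply: tor_annihilated; have [c' ->] := w_in_varpiX i.
  by rewrite -(prednK p_gt0) exprS -!mulrA va !mulr0.
split=> //; apply: (tor_cong_eq (@wB _)) => //; first exact: torX.
apply: cong_trans _ (cong_sym cb).
exact: congX_prime p_prime (natr_in_w _) (varpiX_in_w i) ab.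
Qed.

Lemma square1_of_graph i : square1 t w0 i.
Proof.
move=> c b /= tc cb; have [y yb] := F_surj b.
have [a [ta ac _]] := square2_exists tc (cong_trans cb yb).
have [x [tx xa]] := Frel_total ta.
have xc : t i x = c.
  by apply: (tor_cong_eq (@wB _)) => //; [apply: tor_t | rewrite -ac].
have xb : cong (I0R t w0 i) x b by apply: t_descent; rewrite xc.
exists x; split=> [// | x' [tx' _ x'b]].
by apply: (tor_cong_eq (@wB _)) => //; apply: cong_trans xb (cong_sym x'b).
Qed.

Lemma square2_of_graph i : square2 p t w0 w1 i.
Proof.
move=> c b /= tc cb; have [a [ta ac ab]] := square2_exists tc cb.
exists a; split=> [// | a' [ta' a'c _]].
by apply: tor_frobenius_inj => //; rewrite ac a'c.
Qed.

End SquaresOfCondG.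

Section CondGOfSquares.
Hypothesis sq1 : forall i, square1 t w0 i.
Hypothesis sq2 : forall i, square2 p t w0 w1 i.

Lemma w_bounded_of_squares i : bounded_torsion (w i).
Proof.
apply: bounded_torsion_of_sq => y wy; set z := w i * y.
have tz : tors i z by apply: tor_annihilated; rewrite /z mulrA -expr2.
have z2 : z ^+ 2 = 0 by rewrite /z exprMn (expr2 y) mulrA wy mul0r.
have zp : z ^+ p = 0 by rewrite -(subnK p_gt1) exprD z2 mulr0.
have tzp : t i z ^+ p = 0 by rewrite -rmorphXn zp rmorph0.
have tz0 : t i z = 0.
  apply: (cartesian_uniq (@sq2 i) (a2 := 0) (b := 0)) => /=.
  - exact: tor_t.
  - exact: tor0.
  - exact: torX p_gt0 (tor_t tz).
  - by rewrite tzp zeroX.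
  - by rewrite tzp zeroX; apply: cong_refl.
  - by rewrite /cong subr0 rmorphM; apply/pidMr/w_in_varpi.
  - exact: cong_refl.
apply: (cartesian_uniq (@sq1 i) (a2 := 0) (b := 0)) => /=.
- exact: tz.
- exact: tor0.
- exact: tor_t.
- by rewrite tz0 rmorph0.
- by rewrite tz0 rmorph0; apply: cong_refl.
- by rewrite /cong subr0; apply/pidMr/pid_gen.
- exact: cong_refl.
Qed.

Lemma Frel_total_of_squares i (y : R i.+1) : tors i.+1 y ->
  exists x, tors i x /\ Frel p t w0 i y x.
Proof.
move=> ty; have [x0 yx0] := frobenius_image y.
have [x [[tx xy _] _]] := sq1 (torX p_gt0 ty) (cong_sym yx0).
by exists x; split; rewrite // /Frel xy; apply: cong_refl.
Qed.

Lemma Frel_inj_of_squares i (y1 y2 : R i.+1) (x : R i) :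
  tors i.+1 y1 -> tors i.+1 y2 -> tors i x ->
  Frel p t w0 i y1 x -> Frel p t w0 i y2 x -> y1 = y2.
Proof.
move=> ty1 ty2 _ y1x y2x; have wB := @w_bounded_of_squares i.+1.
have y12 : y1 ^+ p = y2 ^+ p.
  apply: (tor_cong_eq wB); [exact: torX | exact: torX |].
  exact: cong_trans (cong_sym y1x) y2x.
have d12 : (y2 - y1) ^+ p = 0.
  have := tor_exprDl wB (y2 - y1) p_prime (natr_in_w _) ty1.
  by rewrite addrC subrK -y12 -{1}(addr0 (y1 ^+ p)) => /addrI <-.
apply: (cartesian_uniq (@sq2 i) (b := y1)) => //=.
- exact: torX.
- exact: cong_refl.
- exact: cong_refl.
- by apply: varpi_of_frobenius; rewrite d12; apply: pid0.
Qed.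

Lemma Frel_surj_of_squares i (x : R i) : tors i x ->
  exists y, tors i.+1 y /\ Frel p t w0 i y x.
Proof.
move=> tx; have [y0 xy0] := F_surj x.
have [y [[ty yx _] _]] := sq2 (tor_t tx) xy0.
by exists y; split; rewrite // /Frel yx; apply: cong_refl.
Qed.

End CondGOfSquares.

Lemma squares_of_cond_g : cond_g p t w0 ->
  forall i, square1 t w0 i /\ square2 p t w0 w1 i.
Proof.
case/cond_g_iff => wB Frel_total Frel_inj Frel_surj i.
by split; [apply: square1_of_graph | apply: square2_of_graph].
Qed.

Lemma cond_g_of_squares : (forall i, square1 t w0 i /\ square2 p t w0 w1 i) ->
  cond_g p t w0.
Proof.
move=> sq; have sq1 i := (sq i).1; have sq2 i := (sq i).2.
apply/cond_g_iff; split.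
- exact: w_bounded_of_squares.
- exact: Frel_total_of_squares.
- exact: Frel_inj_of_squares.
- exact: Frel_surj_of_squares.
Qed.

End Tower.

Theorem theorem2p11 (p : nat) (R : nat -> comPzRingType)
  (t : forall i, {rmorphism R i -> R i.+1}) (w0 : R 0) (w1 : R 1) :
  prime p ->
  pi_tower p t w0 -> cond_d p t w0 -> cond_f p t w0 w1 ->
  (cond_g p t w0 <-> forall i : nat, square1 t w0 i /\ square2 p t w0 w1 i).
Proof.
move=> p_prime [p_in_I0 t_descent frobenius_image] F_surj [I1_pow ker_F].
by split; [apply: squares_of_cond_g | apply: cond_g_of_squares].
Qed.
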